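(* Consider an instance of the Submodular Prophet Inequality problem with non-negative submodular objective $f:2^{\mathcal{U}}\to\mathbb{R}_{\ge0}$ and constraint $(\mathcal{N},\mathcal{I})$, and let $\mathcal{P}$ be a polyhedral relaxation of $(\mathcal{N},\mathcal{I})$. Then \[\max_{\bm{z}\in\mathcal{P}''} f^+(\bm{z})\ \ge\ \mathrm{OPT}.\]
   Context: Submodular Prophet Inequality instance: $\mathcal{N}=[n]$; independent random variables $X_1,\dots,X_n$, $X_i$ taking values in a finite set $\mathcal{U}_i$ with distribution $D_i$; the $\mathcal{U}_i$ are pairwise disjoint, $\mathcal{U}=\bigcup_i\mathcal{U}_i$, $\mathcal{D}(e)=D_i(e)=\Pr[X_i=e]$ for $e\in\mathcal{U}_i$; $f$ is non-negative submodular ($f(A)+f(B)\ge f(A\cup B)+f(A\cap B)$, $f(\emptyset)=0$); $\mathcal{I}\subseteq2^{\mathcal{N}}$ is downward-closed. Prophet's value $\mathrm{OPT}=\mathbb{E}[\max_{T\in\mathcal{I}}f(\{X_i:i\in T\})]$. A polyhedral relaxation is a convex polytope $\mathcal{P}\subseteq[0,1]^{\mathcal{N}}$ containing $\mathbf{1}_T$ for all $T\in\mathcal{I}$. $\mathcal{P}'=\{\bm{y}\in[0,1]^{\mathcal{U}}:\exists\bm{x}\in\mathcal{P},\ \sum_{e\in\mathcal{U}_i}y_e=x_i\ \forall i\}$, $\mathcal{P}''=\{\bm{z}\in\mathcal{P}':z_e\le\mathcal{D}(e)\ \forall e\in\mathcal{U}\}$. Concave closure: $f^+(\bm{z})=\max\{\sum_{S\subseteq\mathcal{U}}a_Sf(S):a_S\ge0,\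 \sum_Sa_S=1,\ \sum_Sa_S\mathbf{1}_S=\bm{z}\}$. *)

From HB Require Import structures.
From mathcomp Require Import all_boot all_order all_algebra.
From mathcomp Require Import boolp classical_sets reals.
Set Implicit Arguments. Unset Strict Implicit. Unset Printing Implicit Defensive.
Import Order.TTheory GRing.Theory Num.Theory.
Local Open Scope ring_scope.
Local Open Scope classical_set_scope.

(* Ground set U : finType; owner e = the index i with e \in U_i.
   Thus U_i := [set e | owner e == i] are pairwise disjoint and cover U. *)

Definition nonneg_submodular (R : realType) (U : finType) (f : {set U} -> R) : Prop :=
  f finset.set0 = 0 /\ (forall S, 0 <= f S) /\
  (forall A B : {set U}, f (A :|: B) + f (A :&: B) <= f A + f B).

(* Independent distributions D_i on U_i: D e = Pr[X_{owner e} = e]. *)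
Definition distributions (R : realType) (n : nat) (U : finType)
  (owner : U -> 'I_n) (D : U -> R) : Prop :=
  (forall e, 0 <= D e) /\ (forall i : 'I_n, \sum_(e | owner e == i) D e = 1).

Definition downward_closed (n : nat) (I : {set {set 'I_n}}) : Prop :=
  finset.set0 \in I /\ (forall A B : {set 'I_n}, B \in I -> A \subset B -> A \in I).

Definition convex_polytope (R : realType) (n : nat) (P : set ('I_n -> R)) : Prop :=
  exists (m : nat) (v : 'I_m -> 'I_n -> R),
    P = [set x | exists lam : 'I_m -> R,
                  (forall k, 0 <= lam k) /\ \sum_k lam k = 1 /\
                  (forall i, x i = \sum_k lam k * v k i)].

Definition indicator (R : realType) (n : nat) (T : {set 'I_n}) : 'I_n -> R :=
  fun i => (i \in T)%:R.

Definition polyhedral_relaxation (R : realType) (n : nat)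
  (I : {set {set 'I_n}}) (P : set ('I_n -> R)) : Prop :=
  convex_polytope P /\
  (forall x, P x -> forall i, 0 <= x i <= 1) /\
  (forall T, T \in I -> P (indicator R T)).

Definition Pprime (R : realType) (n : nat) (U : finType) (owner : U -> 'I_n)
  (P : set ('I_n -> R)) : set (U -> R) :=
  [set y | (forall e, 0 <= y e <= 1) /\
           exists x, P x /\ forall i, \sum_(e | owner e == i) y e = x i].

Definition Psecond (R : realType) (n : nat) (U : finType) (owner : U -> 'I_n)
  (D : U -> R) (P : set ('I_n -> R)) : set (U -> R) :=
  [set z | Pprime owner P z /\ forall e, z e <= D e].

(* Concave closure f^+ (the max of the LP, written as the sup of its values). *)
Definition concave_closure (R : realType) (U : finType) (f : {set U} -> R)
  (z : U -> R) : R :=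
  sup [set v | exists a : {set U} -> R,
         (forall S, 0 <= a S) /\ \sum_S a S = 1 /\
         (forall e, \sum_S a S * (e \in S)%:R = z e) /\
         v = \sum_S a S * f S].

(* Prophet's value: E[max_{T in I} f({X_i : i in T})], X_i independent
   with laws D_i; a realization is r : 'I_n -> U with owner (r i) = i,
   having probability prod_i D (r i). *)
Definition OPT (R : realType) (n : nat) (U : finType) (owner : U -> 'I_n)
  (D : U -> R) (f : {set U} -> R) (I : {set {set 'I_n}}) : R :=
  \sum_(r : {ffun 'I_n -> U} | [forall i, owner (r i) == i])
     (\prod_i D (r i)) * \big[Num.max/0]_(T in I) f (r @: T).

From HB Require Import structures.
From mathcomp Require Import all_boot all_order all_algebra.
From mathcomp Require Import boolp classical_sets reals.
From mathcomp Require Import topology normedtype derive.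
Import Order.TTheory GRing.Theory Num.Theory.
Import numFieldNormedType.Exports ArrowAsProduct.
Local Open Scope ring_scope.
Local Open Scope classical_set_scope.

(* The prophet's choice, viewed as the random set {X_i | i in T(X)} for an
   optimal rule T, has a law a on subsets of U with sum_S a_S f(S) = OPT.  Its
   marginal lies in P'': Pr[e is chosen] <= Pr[X_(owner e) = e] = D(e), and the
   owner sums of the marginal average the indicators of the chosen index sets,
   a point of the convex set P.  Conversely, the points of P'' together with
   the distributions that represent them are the pairs (lam, a) of weights on
   the vertices of P and on subsets of U satisfying finitely many linear
   constraints.  These pairs form a compact set, so the linear objective
   sum_S a_S f(S) attains a maximum on it; every value in the definition of
   f^+(z') for z' in P'' is below that maximum, which is below f^+ of the
   marginal of the maximiser.  That marginal thus maximises f^+ on P'' and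
   dominates OPT. *)

Section finite_distributions.
Context {R : realType}.

Definition fdist {T : finType} (a : T -> R) : Prop :=
  (forall t, 0 <= a t) /\ \sum_t a t = 1.

Lemma fdist_le1 {T : finType} (a : T -> R) t : fdist a -> a t <= 1.
Proof. by move=> [a_ge0 <-]; rewrite (bigD1 t) //= lerDl sumr_ge0. Qed.

Definition pushforward {T T' : finType} (p : T -> R) (k : T -> T') (t' : T') :
    R :=
  \sum_(t | k t == t') p t.

Lemma sum_pushforward {T T' : finType} (p : T -> R) (k : T -> T')
    (g : T' -> R) :
  \sum_t' pushforward p k t' * g t' = \sum_t p t * g (k t).
Proof.
rewrite (partition_big k xpredT) //=; apply: eq_bigr => t' _.
by rewrite mulr_suml; apply: eq_bigr => t /eqP ->.
Qed.

Lemma fdist_pushforward {T T' : finType} (p : T -> R) (k : T -> T') :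
  fdist p -> fdist (pushforward p k).
Proof.
move=> [p_ge0 p_sum1]; split=> [t'|]; first exact: sumr_ge0.
rewrite -p_sum1; under eq_bigr do rewrite -[pushforward _ _ _]mulr1.
by rewrite sum_pushforward; under eq_bigr do rewrite mulr1.
Qed.

End finite_distributions.

Lemma convex_polytope_convex {R : realType} {n : nat} {P : set ('I_n -> R)}
    {T : finType} (w : T -> R) (x : T -> 'I_n -> R) :
  convex_polytope P -> fdist w -> (forall t, P (x t)) ->
  P (fun i => \sum_t w t * x t i).
Proof.
move=> [m [v ->]] [w_ge0 w_sum1] /choice[lam lamP].
exists (fun k => \sum_t w t * lam t k); split; [|split].
- by move=> k; apply: sumr_ge0 => t _; rewrite mulr_ge0 // (lamP t).1.
- rewrite exchange_big /= -w_sum1; apply: eq_bigr => t _.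
  by rewrite -mulr_sumr (lamP t).2.1 mulr1.
- move=> i; under [RHS]eq_bigr do rewrite mulr_suml.
  rewrite exchange_big /=; apply: eq_bigr => t _.
  by rewrite (lamP t).2.2 mulr_sumr; apply: eq_bigr => k _; rewrite mulrA.
Qed.

Section marginals.
Context {R : realType} {U : finType}.

Definition marginal (a : {set U} -> R) (e : U) : R := \sum_B a B * (e \in B)%:R.

Lemma marginal_bounds (a : {set U} -> R) e : fdist a -> 0 <= marginal a e <= 1.
Proof.
move=> [a_ge0 a_sum1]; rewrite sumr_ge0 => [/=|B _]; last by rewrite mulr_ge0.
by rewrite -a_sum1 ler_sum // => B _; rewrite ler_piMr // lern1 leq_b1.
Qed.

Lemma marginal_pushforward {T : finType} (p : T -> R) (k : T -> {set U}) e :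
  marginal (pushforward p k) e = \sum_t p t * (e \in k t)%:R.
Proof. exact: sum_pushforward. Qed.

Variable f : {set U} -> R.

Lemma concave_closure_ge (a : {set U} -> R) :
  fdist a -> \sum_B a B * f B <= concave_closure f (marginal a).
Proof.
move=> a_dist; apply: ub_le_sup; last by exists a; have [? ?] := a_dist.
exists (\sum_B `|f B|) => _ [b [b_ge0 [b_sum1 [_ ->]]]].
apply: ler_sum => B _; apply: le_trans (ler_norm _) _.
by rewrite normrM ger0_norm // ler_piMl // (fdist_le1 _ _ (conj b_ge0 b_sum1)).
Qed.

Lemma concave_closure_le (z : U -> R) c : 0 <= c ->
    (forall a, fdist a -> marginal a = z -> \sum_B a B * f B <= c) ->
  concave_closure f z <= c.
Proof.
move=> c_ge0 le_c; rewrite /concave_closure; set E := [set _ | _].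
have [->|/set0P E_neq0] := eqVneq E set0; first by rewrite sup0.
apply: ge_sup => // _ [a [a_ge0 [a_sum1 [a_z ->]]]].
by apply: le_c; [split|apply/funext].
Qed.

End marginals.

Section prophet.
Context {R : realType} {n : nat} {U : finType} {owner : U -> 'I_n} {D : U -> R}.
Hypothesis D_dist : distributions owner D.

Definition coord_law (i : 'I_n) (e : U) : R := if owner e == i then D e else 0.

Definition outcome_prob (r : {ffun 'I_n -> U}) : R := \prod_i coord_law i (r i).

Lemma coord_law_sum1 i : \sum_e coord_law i e = 1.
Proof. by rewrite -(D_dist.2 i) [RHS]big_mkcond. Qed.

Lemma outcome_prob_fdist : fdist outcome_prob.
Proof.
split=> [r|]; last first.
  rewrite /outcome_prob -bigA_distr_bigA big1 // => i _.
  exact: coord_law_sum1.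
apply: prodr_ge0 => i _; rewrite /coord_law.
by case: ifP => // _; exact: D_dist.1.
Qed.

Lemma outcome_prob_neq0 r : outcome_prob r != 0 -> forall i, owner (r i) = i.
Proof.
move=> r_neq0 i; apply/eqP; apply: contraNT r_neq0 => owner_neq.
by rewrite /outcome_prob (bigD1 i) //= /coord_law (negbTE owner_neq) mul0r.
Qed.

Lemma outcome_prob_at e :
  \sum_(r : {ffun 'I_n -> U} | r (owner e) == e) outcome_prob r = D e.
Proof.
pose Q i e' := (i == owner e) ==> (e' == e).
have -> : D e = \prod_i \sum_(e' | Q i e') coord_law i e'.
  rewrite (bigD1 (owner e)) //= [X in _ * X]big1 => [|i i_neq]; last first.
    rewrite -(coord_law_sum1 i); apply: eq_bigl => e'.
    by rewrite /Q (negbTE i_neq).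
  rewrite mulr1 (eq_bigl (pred1 e)) => [|e']; last by rewrite /Q eqxx.
  by rewrite big_pred1_eq /coord_law eqxx.
rewrite bigA_distr_big_dep; apply: eq_bigl => r.
apply/eqP/familyP => [r_e i|/(_ (owner e))]; rewrite unfold_in /Q.
  by apply/implyP => /eqP ->; rewrite r_e.
by rewrite eqxx => /eqP.
Qed.

Lemma OPT_outcome_prob f I :
  OPT owner D f I = \sum_r outcome_prob r * \big[Num.max/0]_(T in I) f (r @: T).
Proof.
rewrite /OPT big_mkcond /=; apply: eq_bigr => r _.
case: ifPn => [/forallP r_valid|r_invalid].
  by congr (_ * _); apply: eq_bigr => i _; rewrite /coord_law r_valid.
have [->|/outcome_prob_neq0 r_valid] := eqVneq (outcome_prob r) 0.
  by rewrite mul0r.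
by case/negP: r_invalid; apply/forallP => i; apply/eqP; exact: r_valid.
Qed.

Lemma owner_sum_image (r : 'I_n -> U) (T : {set 'I_n}) i :
    (forall j, owner (r j) = j) ->
  \sum_(e | owner e == i) (e \in r @: T)%:R = (i \in T)%:R :> R.
Proof.
move=> r_section; have r_inj : injective r.
  by move=> j1 j2 r_eq; rewrite -(r_section j1) r_eq r_section.
rewrite (bigD1 (r i)) /=; last by rewrite r_section.
rewrite mem_imset // big1 ?addr0 // => e /andP[/eqP owner_e e_neq].
case: imsetP => // -[j _ e_rj]; case/eqP: e_neq.
by rewrite e_rj -owner_e e_rj r_section.
Qed.

Variables (P : set ('I_n -> R)) (I : {set {set 'I_n}}).
Hypotheses (P_polytope : convex_polytope P)
  (P_I : forall T, T \in I -> P (indicator R T)).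

Definition chosen_set_law (S : {ffun 'I_n -> U} -> {set 'I_n}) : {set U} -> R :=
  pushforward outcome_prob (fun r => r @: S r).

Lemma fdist_chosen_set_law S : fdist (chosen_set_law S).
Proof. exact/fdist_pushforward/outcome_prob_fdist. Qed.

Lemma Psecond_chosen_set_law S :
  (forall r, S r \in I) -> Psecond owner D P (marginal (chosen_set_law S)).
Proof.
move=> S_I; have [p_ge0 _] := outcome_prob_fdist.
split; [split|] => [e||e].
- exact/marginal_bounds/fdist_chosen_set_law.
- exists (fun i => \sum_r outcome_prob r * indicator R (S r) i); split.
    apply: (convex_polytope_convex _ (fun r => indicator R (S r)) P_polytope);
      by [exact: outcome_prob_fdist | move=> r; exact: P_I].
  move=> i; under eq_bigr do rewrite marginal_pushforward.
  rewrite exchange_big /=; apply: eq_bigr => r _; rewrite -mulr_sumr.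
  have [->|/outcome_prob_neq0 r_section] := eqVneq (outcome_prob r) 0.
    by rewrite !mul0r.
  by rewrite owner_sum_image.
- rewrite marginal_pushforward -outcome_prob_at [leRHS]big_mkcond /=.
  apply: ler_sum => r _; case: ifPn => [_|r_e].
    by rewrite ler_piMr // lern1 leq_b1.
  have [->|/outcome_prob_neq0 r_section] := eqVneq (outcome_prob r) 0.
    by rewrite mul0r.
  case: imsetP => [[j _ e_rj]|_]; last by rewrite mulr0.
  by move: r_e; rewrite e_rj r_section eqxx.
Qed.

Lemma OPT_chosen_set_law (f : {set U} -> R) (T0 : {set 'I_n}) :
    (forall B, 0 <= f B) -> T0 \in I ->
  exists2 S, (forall r, S r \in I) &
    OPT owner D f I = \sum_B chosen_set_law S B * f B.
Proof.
move=> f_ge0 T0_I.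
have best r :
    exists T, T \in I /\ \big[Num.max/0]_(T in I) f (r @: T) = f (r @: T).
  exists [arg max_(T > T0 in I) f (r @: T)]%O.
  by split; [case: arg_maxP | exact: bigmax_eq_arg].
have [S S_best] := choice best.
exists S => [r|]; first exact: (S_best r).1.
rewrite sum_pushforward OPT_outcome_prob; apply: eq_bigr => r _.
by rewrite (S_best r).2.
Qed.

End prophet.

Section compactness.
Context {R : realType}.

Lemma closed_le_continuous {T : topologicalType} (g h : T -> R) :
  continuous g -> continuous h -> closed [set t | g t <= h t].
Proof.
move=> g_cont h_cont.
have -> : [set t | g t <= h t] = (fun t => h t - g t) @^-1` [set x | 0 <= x].
  by apply/seteqP; split=> t /=; rewrite subr_ge0.
apply: preimage_closed; last exact: closed_ge.
by move=> t _; exact: (continuousB (h_cont t) (g_cont t)).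
Qed.

Lemma closed_eq_continuous {T : topologicalType} (g h : T -> R) :
  continuous g -> continuous h -> closed [set t | g t = h t].
Proof.
move=> g_cont h_cont.
have -> : [set t | g t = h t] = [set t | g t <= h t] `&` [set t | h t <= g t].
  apply/seteqP; split=> t /=; first by move=> ->.
  by move=> [le_gh le_hg]; apply/eqP; rewrite eq_le le_gh.
by apply: closedI; exact: closed_le_continuous.
Qed.

Lemma closed_forall {T : topologicalType} {J : Type} (A : J -> set T) :
  (forall j, closed (A j)) -> closed [set t | forall j, A j t].
Proof.
move=> A_closed; have -> : [set t | forall j, A j t] = \bigcap_(j in setT) A j.
  by apply/seteqP; split=> t /= At j //; exact: At.
by apply: closed_bigI => j _; exact: A_closed.
Qed.

Lemma continuous_lincomb {T : topologicalType} {J : finType} (P : pred J)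
    (x : J -> T -> R) (c : J -> R) :
  (forall j, continuous (x j)) ->
  continuous (fun t => \sum_(j | P j) x j t * c j).
Proof.
move=> x_cont; apply: continuous_big => [|j _ t]; first exact: add_continuous.
by apply: continuousM; [exact: x_cont|exact: cst_continuous].
Qed.

Lemma continuous_fst_eval {A B : eqType} (a : A) :
  continuous (fun w : (A -> R) * (B -> R) => w.1 a).
Proof.
move=> w; have a_cont := @proj_continuous A (fun=> R) a w.1.
by apply: (continuous_comp (f := fst) _ a_cont); exact: cvg_fst.
Qed.

Lemma continuous_snd_eval {A B : eqType} (b : B) :
  continuous (fun w : (A -> R) * (B -> R) => w.2 b).
Proof.
move=> w; have b_cont := @proj_continuous B (fun=> R) b w.2.
by apply: (continuous_comp (f := snd) _ b_cont); exact: cvg_snd.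
Qed.

Lemma compact_unit_box (J : eqType) :
  compact [set x : J -> R | forall j, 0 <= x j <= 1].
Proof.
have -> : [set x : J -> R | forall j, 0 <= x j <= 1] =
          [set x | forall j, `[0, 1]%classic (x j)].
  by apply/seteqP; split=> x /= x_box j; move: (x_box j); rewrite /= in_itv.
exact: (tychonoff (fun=> @segment_compact R 0 1)).
Qed.

Lemma compact_fdist (J : finType) : compact [set a : J -> R | fdist a].
Proof.
apply: (subclosed_compact _ (compact_unit_box J)) => [|a a_dist j].
  apply: closedI.
    apply: closed_forall => j; apply: closed_le_continuous.
      exact: cst_continuous.
    exact: proj_continuous.
  apply: closed_eq_continuous; last exact: cst_continuous.
  apply: continuous_big => [|j _]; first exact: add_continuous.
  exact: proj_continuous.
by rewrite a_dist.1 fdist_le1.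
Qed.

End compactness.

Section Psecond_maximum.
Context {R : realType} {n : nat} {U : finType} (owner : U -> 'I_n) (D : U -> R).
Context {m : nat} (v : 'I_m -> 'I_n -> R).

Local Notation weights := (('I_m -> R) * ({set U} -> R))%type.

Definition conv_hull : set ('I_n -> R) :=
  [set x | exists lam : 'I_m -> R, (forall k, 0 <= lam k) /\ \sum_k lam k = 1 /\
     (forall i, x i = \sum_k lam k * v k i)].

Definition marginal_constraints (w : weights) : Prop :=
  (forall e, marginal w.2 e <= D e) /\
  (forall i, \sum_(e | owner e == i) marginal w.2 e = \sum_k w.1 k * v k i).

Definition Psecond_witness (w : weights) : Prop :=
  (fdist w.1 /\ fdist w.2) /\ marginal_constraints w.

Lemma Psecond_conv_hullP (a : {set U} -> R) : fdist a ->
  Psecond owner D conv_hull (marginal a) <->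
  exists lam, Psecond_witness (lam, a).
Proof.
move=> a_dist; split.
  move=> [[_ [x [[lam [lam_ge0 [lam_sum1 x_lam]]] marg_x]]] marg_D].
  exists lam; split; first by split; [split|].
  by split=> // i; rewrite marg_x x_lam.
move=> [lam [[[lam_ge0 lam_sum1] _] [marg_D marg_lam]]].
split=> //; split=> [e|]; first exact: marginal_bounds.
by exists (fun i => \sum_k lam k * v k i); split=> //; exists lam.
Qed.

Lemma compact_Psecond_witness : compact [set w | Psecond_witness w].
Proof.
apply: compact_closedI.
  exact: compact_setX (compact_fdist _) (compact_fdist _).
have marg_cont e : continuous (fun w : weights => marginal w.2 e).
  exact/continuous_lincomb/continuous_snd_eval.
apply: closedI; apply: closed_forall.
  by move=> e; apply: closed_le_continuous => //; exact: cst_continuous.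
move=> i; apply: closed_eq_continuous.
  by apply: continuous_big => [|e _]; [exact: add_continuous|exact: marg_cont].
exact/continuous_lincomb/continuous_fst_eval.
Qed.

Lemma exists_Psecond_witness_max (f : {set U} -> R) :
    (exists w, Psecond_witness w) ->
  exists2 w, Psecond_witness w & forall w', Psecond_witness w' ->
    \sum_B w'.2 B * f B <= \sum_B w.2 B * f B.
Proof.
move=> [w0 w0_witness].
have obj_cont : continuous (fun w : weights => \sum_B w.2 B * f B).
  exact/continuous_lincomb/continuous_snd_eval.
have [w /set_mem w_witness w_max] := compact_EVT_max (ex_intro _ w0 w0_witness)
  compact_Psecond_witness (continuous_subspaceT obj_cont).
by exists w => // w' /mem_set /w_max.
Qed.

End Psecond_maximum.

Lemma exists_Psecond_max {R : realType} {n : nat} {U : finType}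
    {owner : U -> 'I_n} {D : U -> R} {P : set ('I_n -> R)} (f : {set U} -> R) :
    convex_polytope P ->
    (exists a, fdist a /\ Psecond owner D P (marginal a)) ->
  exists2 a, fdist a /\ Psecond owner D P (marginal a) &
    forall a', fdist a' -> Psecond owner D P (marginal a') ->
      \sum_B a' B * f B <= \sum_B a B * f B.
Proof.
move=> [m [v ->]] [a0 [a0_dist]].
move=> /(Psecond_conv_hullP _ _ _ _ a0_dist) [lam0 w0_witness].
have [[lam a] w_witness w_max] :=
  exists_Psecond_witness_max _ _ _ f (ex_intro _ _ w0_witness).
have a_dist : fdist a := w_witness.1.2.
exists a.
  by split=> //; apply/(Psecond_conv_hullP _ _ _ _ a_dist); exists lam.
by move=> a' a'_dist /(Psecond_conv_hullP _ _ _ _ a'_dist) [lam' /w_max].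
Qed.

Theorem claim1 (R : realType) (n : nat) (U : finType) (owner : U -> 'I_n)
  (D : U -> R) (f : {set U} -> R) (I : {set {set 'I_n}})
  (P : set ('I_n -> R)) :
  distributions owner D ->
  nonneg_submodular f ->
  downward_closed I ->
  polyhedral_relaxation I P ->
  exists z, Psecond owner D P z /\
    (forall z', Psecond owner D P z' ->
       concave_closure f z' <= concave_closure f z) /\
    OPT owner D f I <= concave_closure f z.
Proof.
move=> D_dist [_ [f_ge0 _]] [I0 _] [P_polytope [_ P_I]].
have [S S_I OPT_S] := @OPT_chosen_set_law R n U owner D I f _ f_ge0 I0.
have S_dist := fdist_chosen_set_law D_dist S.
have S_P := Psecond_chosen_set_law D_dist _ _ P_polytope P_I _ S_I.
have [a [a_dist a_P] a_max] :=
  exists_Psecond_max f P_polytope (ex_intro _ _ (conj S_dist S_P)).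
have a_ge0 : 0 <= \sum_B a B * f B.
  by apply: sumr_ge0 => B _; rewrite mulr_ge0 // a_dist.1.
exists (marginal a); split=> //; split.
  move=> z' z'_P; apply: le_trans _ (concave_closure_ge f a a_dist).
  by apply: concave_closure_le => // b b_dist b_z; apply: a_max; rewrite ?b_z.
rewrite OPT_S; apply: le_trans _ (concave_closure_ge f a a_dist).
exact: a_max S_dist S_P.
Qed.
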